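(* Let $A=(S,f_c,f_d)$ be a self-similar cellular automaton and suppose $q\in S$ satisfies $f_c(x,q,z)=f_d(x,q,z)=q$ for all $x,z\in S$. Let $c:\mathbb{Z}\to S$ be an initial configuration with $c(j)=q$ for some $j\in\mathbb{Z}$. Then every evolution $s$ of $A$ from $c$ satisfies $s(j,k)=q$ for all $k\ge 0$, and for every $i<j$ and every $k\ge0$ the value $s(i,k)$ is the same for all evolutions $s$ of $A$ from $c$.
   Context: A self-similar cellular automaton is a triple $A=(S,f_c,f_d)$ with $S$ a finite set of states and $f_c,f_d:S^3\to S$. Cells are indexed by $j\in\mathbb{Z}$; cell $j$ has cycles $[k/2^j,(k+1)/2^j)$, and the $k$-th cycle of cell $j$ is identified with the pair $(j,k)$. The automaton is started at time $0$; the set of cycles is $C=\{(i,k): i\in\mathbb{Z},\ k\in\mathbb{Z}_{\ge 0}\}$. Given an initial configuration $c:\mathbb{Z}\to S$, an evolution of $A$ from $c$ is a map $s:C\to S$ with $s(i,0)=c(i)$ for all $i$ and, for all $(i,k)$ with $k\ge1$, $s(i,k)=f_c\big(s(i-1,\lfloor (k-1)/2\rfloor),s(i,k-1),s(i+1,2k-1)\big)$ if $k$ is even and $s(i,k)=f_d(\text{same arguments})$ if $k$ is odd. *)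

From HB Require Import structures.
From mathcomp Require Import all_boot all_order all_algebra.
Set Implicit Arguments. Unset Strict Implicit. Unset Printing Implicit Defensive.
Import Order.TTheory GRing.Theory Num.Theory.

Record ssca := SSCA {
  ssca_S : finType;
  ssca_fc : ssca_S -> ssca_S -> ssca_S -> ssca_S;
  ssca_fd : ssca_S -> ssca_S -> ssca_S -> ssca_S }.

Definition is_evolution (A : ssca) (c : int -> ssca_S A)
    (s : int -> nat -> ssca_S A) : Prop :=
  (forall i : int, s i 0%N = c i) /\
  (forall (i : int) (k : nat), (1 <= k)%N ->
     s i k = (if odd k then @ssca_fd A else @ssca_fc A)
               (s (i - 1)%R ((k - 1) %/ 2)%N)
               (s i (k - 1)%N)
               (s (i + 1)%R (2 * k - 1)%N)).

From HB Require Import structures.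
From mathcomp Require Import all_boot all_order all_algebra.
From mathcomp Require Import zify.
Import Order.TTheory GRing.Theory Num.Theory.

(* The cycle (i, k+1) is computed from the three cycles
   (i-1, k/2), (i, k) and (i+1, 2k+1).  Two facts follow.
   1. If cell j starts in a state q that every local rule keeps unchanged,
      then by induction on k cell j stays in q forever.
   2. Information only travels leftwards past a fixed column: if two
      evolutions from the same configuration agree at every cycle of cell j,
      they agree at every cycle of every cell i < j.  For the cell
      j - (d+1) and its cycle k we use the weight k * 2^d (proportional to
      the real time k / 2^i at which the cycle starts); each of the three
      cycles a cycle depends on lies either in cell j or has strictly
      smaller weight, so strong induction on the weight concludes.
   The theorem combines 1 (which makes cell j identical in all evolutions)
   with 2. *)

Section Evolution.

Context {A : ssca} {c : int -> ssca_S A}.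

Lemma evolutionS (s : int -> nat -> ssca_S A) (i : int) (k : nat) :
  is_evolution c s ->
  s i k.+1 = (if odd k.+1 then @ssca_fd A else @ssca_fc A)
               (s (i - 1)%R (k %/ 2)) (s i k) (s (i + 1)%R (2 * k).+1).
Proof.
case=> _ rec; rewrite rec // subn1 /=.
by have -> : (2 * k.+1 - 1 = (2 * k).+1)%N by lia.
Qed.

Lemma absorbing_state_persists (q : ssca_S A) (j : int)
    (s : int -> nat -> ssca_S A) :
  (forall x z, @ssca_fc A x q z = q /\ @ssca_fd A x q z = q) ->
  c j = q -> is_evolution c s -> forall k : nat, s j k = q.
Proof.
move=> hq hcj evo; elim=> [|k IH]; first by rewrite evo.1.
rewrite evolutionS // IH.
have [keep_c keep_d] := hq (s (j - 1)%R (k %/ 2)) (s (j + 1)%R (2 * k).+1).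
by case: (odd _).
Qed.

(* The three dependencies of a cycle of weight (k+1) 2^d have smaller weight
   (the right neighbour is one cell closer to j, hence one fewer factor 2). *)
Lemma weight_left (k d : nat) : (k %/ 2 * 2 ^ d.+1 < k.+1 * 2 ^ d)%N.
Proof.
rewrite expnS mulnA ltn_pmul2r ?expn_gt0 //.
by rewrite (leq_ltn_trans (leq_divM k 2)).
Qed.

Lemma weight_prev (k d : nat) : (k * 2 ^ d < k.+1 * 2 ^ d)%N.
Proof. by rewrite ltn_pmul2r ?expn_gt0. Qed.

Lemma weight_right (k d : nat) : ((2 * k).+1 * 2 ^ d < k.+1 * 2 ^ d.+1)%N.
Proof. by rewrite expnS mulnA ltn_pmul2r ?expn_gt0 //; lia. Qed.

Lemma agree_left_of_column (j : int) (s1 s2 : int -> nat -> ssca_S A) :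
  is_evolution c s1 -> is_evolution c s2 ->
  (forall k, s1 j k = s2 j k) ->
  forall (d k : nat), s1 (j - d.+1%:Z)%R k = s2 (j - d.+1%:Z)%R k.
Proof.
move=> evo1 evo2 agree_j d k.
have [n lt_weight] : exists n, (k * 2 ^ d < n)%N by exists (k * 2 ^ d).+1.
elim: n d k lt_weight => [//|n IH] d [|k] lt_weight.
  by rewrite evo1.1 evo2.1.
have IHw d' k' : (k' * 2 ^ d' < k.+1 * 2 ^ d)%N ->
    s1 (j - d'.+1%:Z)%R k' = s2 (j - d'.+1%:Z)%R k'.
  by move=> lt'; apply: IH; rewrite -ltnS (leq_trans _ lt_weight).
rewrite (evolutionS _ _ _ evo1) (evolutionS _ _ _ evo2).
have left_eq : s1 (j - d.+1%:Z - 1)%R (k %/ 2) = s2 (j - d.+1%:Z - 1)%R (k %/ 2).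
  have -> : (j - d.+1%:Z - 1 = j - d.+2%:Z)%R by lia.
  exact/IHw/weight_left.
have right_eq : s1 (j - d.+1%:Z + 1)%R (2 * k).+1 = s2 (j - d.+1%:Z + 1)%R (2 * k).+1.
  (* For the cell j - 1 the right neighbour is column j itself. *)
  case: d {lt_weight IHw left_eq} (IHw) => [|d] IHw.
    by have -> : (j - 1%:Z + 1 = j)%R by lia.
  have -> : (j - d.+2%:Z + 1 = j - d.+1%:Z)%R by lia.
  exact/IHw/weight_right.
by rewrite left_eq IHw ?weight_prev // right_eq.
Qed.

End Evolution.

Theorem mainTheorem3 (A : ssca) (q : ssca_S A)
  (hq : forall x z : ssca_S A, @ssca_fc A x q z = q /\ @ssca_fd A x q z = q)
  (c : int -> ssca_S A) (j : int) (hcj : c j = q) :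
  (forall s, is_evolution c s -> forall k : nat, s j k = q) /\
  (forall i : int, (i < j)%R -> forall k : nat,
     forall s1 s2, is_evolution c s1 -> is_evolution c s2 -> s1 i k = s2 i k).
Proof.
have frozen s : is_evolution c s -> forall k, s j k = q.
  exact: absorbing_state_persists.
split=> // i lt_ij k s1 s2 evo1 evo2.
have [d ->] : exists d : nat, i = (j - d.+1%:Z)%R.
  by exists (absz (j - i - 1)%R); lia.
have same_column_j k' : s1 j k' = s2 j k'.
  by rewrite (frozen _ evo1) (frozen _ evo2).
exact: (agree_left_of_column j s1 s2 evo1 evo2 same_column_j).
Qed.
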